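(* (i) Fix an initial surplus $x>0$. For any fixed $\underline{x}\ge0$, the map $\bar{x}\mapsto R(x;\underline{x},\bar{x})$ (on $\bar{x}>\underline{x}$) is continuous and strictly decreasing with $\lim_{\bar{x}\to\infty}R(x;\underline{x},\bar{x})=0$. For any fixed $\bar{x}>0$, the map $\underline{x}\mapsto R(x;\underline{x},\bar{x})$ (on $0\le\underline{x}<\bar{x}$) is continuous and strictly increasing with $\lim_{\underline{x}\to\bar{x}}R(x;\underline{x},\bar{x})=\infty$. (ii) For any fixed $\underline{x}>0$, the map $\bar{x}\mapsto R(\bar{x};\underline{x},\bar{x})$ is continuous and strictly decreasing with $\lim_{\bar{x}\to\infty}R(\bar{x};\underline{x},\bar{x})=1$; and $R(\bar{x};0,\bar{x})=1$ for every $\bar{x}>0$.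
   Context: Fix $r>0$ and $\mu,\sigma:\mathbb{R}\to\mathbb{R}$ satisfying: (A.1) $\mu,\sigma$ are continuously differentiable and Lipschitz continuous, and $\mu',\sigma'$ are Lipschitz continuous; (A.2) $\sigma^2(x)>0$ for $x\ge0$; (A.3) $\mu'(x)<r$ for $x\ge0$; (A.4) there are $\varepsilon>0$, $x_a\ge0$ with $\mu'(x)<r-\varepsilon$ for $x\ge x_a$; (A.5) $\mu(0)>0$. The surplus process satisfies $dX_t=\mu(X_t)dt+\sigma(X_t)dW_t-dD_t$, $X_0=x$, under $\mathbb{P}_x$ ($W$ a Wiener process, $D$ the cumulative dividends), with bankruptcy time $\tau=\inf\{t\ge0:X_t\le0\}$. For an impulse dividend policy $S=(\tau_n,\zeta_n)_{n\ge1}$ ($\tau_n$ increasing stopping times tending to $\infty$, $\zeta_n\in(0,X_{\tau_n}]$ the $n$-th dividend paid at $\tau_n$), $R(x;S)=\mathbb{E}_x\big(\sum_{n:\tau_n\le\tau}e^{-r\tau_n}\big)$. For $\bar{x}>\underline{x}\ge0$, the constant lump sum dividend barrier policy $(\underline{x},\bar{x})$ pays a dividend $\bar{x}-\underline{x}$ each time $X$ reaches $\bar{x}$ (i.e. $\tau_1=\inf\{t>0:X_t\ge\bar{x}\}$, $\tau_n=\inf\{t>\tau_{n-1}:X_t\ge\bar{x}\}$), and additionally, if the initial surplus $x\ge\bar{x}$, a dividend $x-\underline{x}$ at time $0$; $R(x;\underline{x},\bar{x})$ is $R$ for this policy. One has $R(x;\underline{x},\bar{x})=g(x)/(g(\bar{x})-g(\underline{x}))$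 for $0\le x\le\bar{x}$, where $g$ is a canonical solution: $g\in C^2(0,\infty)$, $\mu g'+\frac12\sigma^2g''=rg$ on $(0,\infty)$, $g(0)=0$, $g'(0)>0$. *)

From Stdlib Require Import Reals Lra.
From Coquelicot Require Import Coquelicot.
Open Scope R_scope.

Definition Lipschitz (f : R -> R) : Prop :=
  exists L : R, forall x y : R, Rabs (f x - f y) <= L * Rabs (x - y).

Definition standing_assumptions (r : R) (mu sigma : R -> R) : Prop :=
  (forall x, ex_derive mu x) /\ (forall x, continuous (Derive mu) x) /\
  (forall x, ex_derive sigma x) /\ (forall x, continuous (Derive sigma) x) /\
  Lipschitz mu /\ Lipschitz sigma /\
  Lipschitz (Derive mu) /\ Lipschitz (Derive sigma) /\
  (forall x, 0 <= x -> 0 < sigma x ^ 2) /\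
  (forall x, 0 <= x -> Derive mu x < r) /\
  (exists eps xa, 0 < eps /\ 0 <= xa /\
     forall x, xa <= x -> Derive mu x < r - eps) /\
  0 < mu 0.

Definition canonical_solution (r : R) (mu sigma g : R -> R) : Prop :=
  (forall x, 0 < x ->
     ex_derive g x /\ ex_derive (Derive g) x /\
     continuous (Derive (Derive g)) x /\
     mu x * Derive g x + / 2 * sigma x ^ 2 * Derive (Derive g) x = r * g x) /\
  g 0 = 0 /\
  exists d : R, 0 < d /\
    filterlim (fun h => (g h - g 0) / h) (at_right 0) (locally d).

(** Expected discounted number of dividends R(x; lo, hi) of the constant lump
    sum dividend barrier policy (lo, hi), expressed through the canonical
    solution g.  For x > hi a dividend x - lo is paid at time 0 and the surplus
    restarts at lo, so R(x) = 1 + R(lo) = 1 + g(lo)/(g(hi)-g(lo)). *)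
Definition R_barrier (g : R -> R) (x lo hi : R) : R :=
  if Rle_dec x hi then g x / (g hi - g lo)
  else 1 + g lo / (g hi - g lo).

(* The canonical solution g is positive and strictly increasing on (0, oo).  Near 0 this
   follows from g(h) ~ g'(0) h; beyond, at a positive critical point the ODE gives
   g'' = 2 r g / sigma^2 > 0, so g has no positive interior maximum and positive values of g
   can only increase.  Moreover g is unbounded: with mu(y) <= A (1 + y), the function
   phi(y) = (1 + y) g'(y) never drops below min(phi(1), r g(1) / (2 A)) on [1, oo), because
   below that level the ODE forces phi' > 0; hence g' >= m / (1 + y) and g grows at least
   like m ln(1 + y).
   For 0 <= lo < hi the barrier value is R(x; lo, hi) = g(min(x, hi)) / (g(hi) - g(lo)),
   also for x > hi, where 1 + g(lo) / (g(hi) - g(lo)) = g(hi) / (g(hi) - g(lo)).  All the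
   continuity, monotonicity and limit statements follow from this formula and the above
   properties of g. *)

From Stdlib Require Import Reals Lra.
From Coquelicot Require Import Coquelicot.
Open Scope R_scope.

Lemma Rdiv_lt_contravar_denom (a b c : R) : 0 < a -> 0 < b -> b < c -> a / c < a / b.
Proof.
intros Ha Hb Hbc. apply Rmult_lt_compat_l; [exact Ha|].
apply Rinv_lt_contravar; [nra|exact Hbc].
Qed.

Lemma Rdiv_sub_lt (c s t : R) : 0 < c -> c < s -> s < t -> t / (t - c) < s / (s - c).
Proof.
intros Hc Hs Ht.
replace (t / (t - c)) with (1 + c / (t - c)) by (field; lra).
replace (s / (s - c)) with (1 + c / (s - c)) by (field; lra).
apply Rplus_lt_compat_l, Rdiv_lt_contravar_denom; lra.
Qed.

Lemma continuous_Rmin_l (c a : R) : continuous (Rmin c) a.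
Proof.
apply filterlim_locally. intros eps. exists eps. intros y Hy.
change (Rabs (Rmin c y - Rmin c a) < eps). change (Rabs (y - a) < eps) in Hy.
unfold Rmin. destruct (Rle_dec c y), (Rle_dec c a);
  apply Rabs_def2 in Hy; apply Rabs_def1; lra.
Qed.

Lemma Rbar_mult_pos_p_infty (a : R) : 0 < a -> Rbar_mult a p_infty = p_infty.
Proof.
intros Ha. apply is_Rbar_mult_unique, is_Rbar_mult_sym, is_Rbar_mult_p_infty_pos, Ha.
Qed.

Lemma filterlim_div_at_right_0 (c : R) :
  0 < c -> filterlim (fun t => c / t) (at_right 0) (Rbar_locally p_infty).
Proof.
intros Hc. rewrite <- (Rbar_mult_pos_p_infty c Hc).
exact (filterlim_comp _ _ _ _ _ _ _ _ filterlim_Rinv_0_right (filterlim_Rbar_mult_l c p_infty)).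
Qed.

Lemma is_derive_pos_locally_increasing (f : R -> R) (p l : R) :
  is_derive f p l -> 0 < l ->
  exists del, 0 < del /\ forall s, 0 < s < del -> f (p - s) < f p < f (p + s).
Proof.
intros Hd Hl. apply is_derive_Reals in Hd. destruct (Hd l Hl) as [del Hdel].
exists del. split; [apply cond_pos|]. intros s Hs.
assert (Hquot : forall h, h <> 0 -> Rabs h < del -> 0 < (f (p + h) - f p) * h).
{ intros h Hh Hhd. specialize (Hdel h Hh Hhd). apply Rabs_def2 in Hdel.
  replace ((f (p + h) - f p) * h) with ((f (p + h) - f p) / h * (h * h)) by (field; lra).
  apply Rmult_lt_0_compat; [lra|]. destruct (Rlt_or_le h 0); nra. }
assert (Hm := Hquot (- s) ltac:(lra) ltac:(rewrite Rabs_Ropp, Rabs_right; lra)).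
assert (Hp := Hquot s ltac:(lra) ltac:(rewrite Rabs_right; lra)).
replace (p - s) with (p + - s) by ring. split; nra.
Qed.

Lemma MVT_is_derive (f f' : R -> R) (a b : R) :
  a < b -> (forall t, a <= t <= b -> is_derive f t (f' t)) ->
  exists c, a < c < b /\ f b - f a = f' c * (b - a).
Proof.
intros Hab Hd. destruct (MVT_cor2 f f' a b Hab) as [c [Ec Hc]].
- intros t Ht. now apply is_derive_Reals, Hd.
- now exists c.
Qed.

Lemma continuous_interval_interior_max (f : R -> R) (a c b : R) :
  a < c < b -> f a < f c -> f b <= f c ->
  (forall t, a <= t <= b -> continuous f t) ->
  exists p, a < p < b /\ f c <= f p /\ forall t, a < t < b -> f t <= f p.
Proof.
intros Hc Hac Hbc Hf.
destruct (continuity_ab_maj f a b) as [p [Hmax Hp]]; [lra| |].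
{ intros t Ht. apply continuity_pt_filterlim, Hf, Ht. }
assert (Hcp : f c <= f p) by (apply Hmax; lra).
destruct (Req_dec p a) as [->|Hpa]; [lra|].
destruct (Req_dec p b) as [->|Hpb].
- exists c. repeat split; try lra. intros t Ht. specialize (Hmax t). lra.
- exists p. repeat split; try lra. intros t Ht. apply Hmax. lra.
Qed.

Lemma ge_of_derive_pos_below (f f' : R -> R) (a m : R) :
  (forall t, a <= t -> is_derive f t (f' t)) ->
  (forall t, a <= t -> f t < m -> 0 < f' t) ->
  m <= f a -> forall t, a <= t -> m <= f t.
Proof.
intros Hd Hpos Ha t Ht. destruct (Rlt_or_le (f t) m) as [Hlt|]; [exfalso|assumption].
destruct (continuity_ab_min f a t) as [p [Hmin Hp]]; [exact Ht| |].
{ intros u Hu. apply continuity_pt_filterlim, (ex_derive_continuous f).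
  exists (f' u). apply Hd. lra. }
assert (Hpt : f p <= f t) by (apply Hmin; lra).
assert (Hpa : a < p) by (destruct Hp as [[|<-] _]; lra).
destruct (is_derive_pos_locally_increasing f p (f' p)) as [del [Hdel Hloc]];
  [apply Hd; lra|apply Hpos; lra|].
set (s := Rmin del (p - a) / 2).
assert (Hs : 0 < s < del /\ s < p - a) by (unfold s, Rmin; destruct Rle_dec; lra).
destruct (Hloc s) as [Hlt' _]; [lra|].
specialize (Hmin (p - s)). lra.
Qed.

Lemma Lipschitz_linear_growth (f : R -> R) :
  Lipschitz f -> exists A, 0 < A /\ forall x, 0 <= x -> f x <= A * (1 + x).
Proof.
intros [L HL]. pose proof (Rabs_pos (f 0)). pose proof (Rabs_pos L).
exists (Rabs (f 0) + Rabs L + 1). split; [lra|].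
intros x Hx. specialize (HL x 0). rewrite Rminus_0_r, (Rabs_right x) in HL by lra.
pose proof (Rle_abs (f x - f 0)). pose proof (Rle_abs (f 0)).
assert (L * x <= Rabs L * x) by (apply Rmult_le_compat_r; [lra|apply Rle_abs]).
assert (0 <= Rabs (f 0) * x) by (apply Rmult_le_pos; [apply Rabs_pos|lra]).
lra.
Qed.

Lemma increment_le_of_derive_le (f k f' k' : R -> R) (a b : R) :
  a <= b ->
  (forall t, a <= t <= b -> is_derive f t (f' t)) ->
  (forall t, a <= t <= b -> is_derive k t (k' t)) ->
  (forall t, a <= t <= b -> k' t <= f' t) ->
  k b - k a <= f b - f a.
Proof.
intros [Hab|<-] Hf Hk Hle; [|lra].
destruct (MVT_is_derive (fun t => f t - k t) (fun t => f' t - k' t) a b Hab) as [c [Hc E]].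
- intros t Ht. apply (is_derive_minus f k); [apply Hf|apply Hk]; exact Ht.
- assert (0 <= (f' c - k' c) * (b - a)) by (apply Rmult_le_pos; [specialize (Hle c); lra|lra]).
  lra.
Qed.

Section CanonicalSolution.

Variables (r : R) (mu sigma g : R -> R) (d : R).
Hypothesis r_pos : 0 < r.
Hypothesis sigma2_pos : forall x, 0 < x -> 0 < sigma x ^ 2.
Hypothesis mu_Lipschitz : Lipschitz mu.
Hypothesis g_derivable : forall x, 0 < x -> ex_derive g x.
Hypothesis Dg_derivable : forall x, 0 < x -> ex_derive (Derive g) x.
Hypothesis g_ode : forall x, 0 < x ->
  mu x * Derive g x + / 2 * sigma x ^ 2 * Derive (Derive g) x = r * g x.
Hypothesis g_0 : g 0 = 0.
Hypothesis d_pos : 0 < d.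
Hypothesis g_right_derive_0 : filterlim (fun h => (g h - g 0) / h) (at_right 0) (locally d).

Lemma canonical_continuous (x : R) : 0 < x -> continuous g x.
Proof. intros Hx. apply (ex_derive_continuous g), g_derivable, Hx. Qed.

Lemma Derive2_pos_at_critical (p : R) :
  0 < p -> 0 < g p -> Derive g p = 0 -> 0 < Derive (Derive g) p.
Proof.
intros Hp Hg Hcrit. pose proof (g_ode p Hp) as E. rewrite Hcrit in E.
pose proof (sigma2_pos p Hp). nra.
Qed.

Lemma no_positive_interior_max (a p b : R) :
  0 <= a -> a < p < b -> 0 < g p -> (forall y, a < y < b -> g y <= g p) -> False.
Proof.
intros Ha Hp Hgp Hmax.
assert (Hp0 : 0 < p) by lra.
assert (Hcrit : Derive g p = 0).
{ rewrite <- (Derive_Reals g p (ex_derive_Reals_0 _ _ (g_derivable p Hp0))).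
  apply (deriv_maximum g a b); [lra|lra|]. intros y Hy1 Hy2. apply Hmax. lra. }
destruct (is_derive_pos_locally_increasing (Derive g) p (Derive (Derive g) p))
  as [del [Hdel Hloc]].
{ now apply Derive_correct, Dg_derivable. }
{ now apply Derive2_pos_at_critical. }
set (t := p + Rmin del (b - p) / 2).
assert (Ht : p < t < b /\ t - p < del) by (unfold t, Rmin; destruct Rle_dec; lra).
destruct (MVT_is_derive g (Derive g) p t) as [c [Hc E]]; [lra| |].
{ intros u Hu. apply Derive_correct, g_derivable. lra. }
assert (Hc' : 0 < Derive g c).
{ destruct (Hloc (c - p)) as [_ H]; [lra|]. replace (p + (c - p)) with c in H by ring. lra. }
assert (g t <= g p) by (apply Hmax; lra).
nra.
Qed.

Lemma canonical_pos_near_0 : exists del, 0 < del /\ forall h, 0 < h < del -> 0 < g h.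
Proof.
destruct (g_right_derive_0 (fun q => 0 < q) (open_gt 0 d d_pos)) as [del Hdel].
exists del. split; [apply cond_pos|]. intros h Hh.
assert (Hball : ball 0 del h) by (change (Rabs (h - 0) < del); rewrite Rabs_right; lra).
specialize (Hdel h Hball (proj1 Hh)). simpl in Hdel. rewrite g_0, Rminus_0_r in Hdel.
replace (g h) with (g h / h * h) by (field; lra).
apply Rmult_lt_0_compat; lra.
Qed.

Lemma canonical_right_continuous_0 : filterlim g (at_right 0) (locally 0).
Proof.
apply (filterlim_ext_loc (fun h => (g h - g 0) / h * h)).
{ unfold at_right, within. apply filter_forall. intros h Hh.
  rewrite g_0. field. lra. }
replace 0 with (d * 0) at 2 by ring.
apply (filterlim_comp_2 (H := locally 0) _ (fun h => h) Rmult g_right_derive_0).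
- apply (filterlim_filter_le_1 _ (filter_le_within _)), filterlim_id.
- apply (filterlim_mult d 0).
Qed.

Lemma canonical_smaller_value_near_0 (c : R) :
  0 < c -> 0 < g c -> exists e, 0 < e < c /\ g e < g c.
Proof.
intros Hc Hgc.
assert (Hsmall : at_right 0 (fun e => g e < g c))
  by exact (canonical_right_continuous_0 _ (open_lt (g c) 0 Hgc)).
assert (Hrange : at_right 0 (fun e => 0 < e < c)).
{ apply (filter_imp (fun e => 0 < e /\ e < c)); [tauto|].
  apply filter_and; [unfold at_right, within; now apply filter_forall|].
  apply filter_le_within. now apply open_lt. }
destruct (filter_ex _ (filter_and _ _ Hrange Hsmall)) as [e He].
now exists e.
Qed.

Lemma canonical_increases_from_positive (c b : R) :
  0 < c -> c < b -> 0 < g c -> g c < g b.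
Proof.
intros Hc Hcb Hgc. destruct (Rlt_or_le (g c) (g b)) as [|Hbc]; [assumption|exfalso].
destruct (canonical_smaller_value_near_0 c Hc Hgc) as [e [He Hec]].
destruct (continuous_interval_interior_max g e c b) as [p [Hp [Hcp Hmax]]]; try lra.
{ intros t Ht. apply canonical_continuous. lra. }
apply (no_positive_interior_max e p b); [lra|lra|lra|exact Hmax].
Qed.

Lemma canonical_pos (x : R) : 0 < x -> 0 < g x.
Proof.
intros Hx. destruct canonical_pos_near_0 as [del [Hdel Hnear]].
set (c := Rmin x del / 2).
assert (Hc : 0 < c /\ c < x /\ c < del) by (unfold c, Rmin; destruct Rle_dec; lra).
destruct Hc as (Hc0 & Hcx & Hcdel).
assert (Hgc : 0 < g c) by (apply Hnear; lra).
pose proof (canonical_increases_from_positive c x Hc0 Hcx Hgc). lra.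
Qed.

Lemma canonical_increasing (a b : R) : 0 <= a -> a < b -> g a < g b.
Proof.
intros [Ha|<-] Hab.
- apply canonical_increases_from_positive; [exact Ha|exact Hab|now apply canonical_pos].
- rewrite g_0. now apply canonical_pos.
Qed.

Lemma canonical_Derive_pos (x : R) : 0 < x -> 0 < Derive g x.
Proof.
assert (Hnonneg : forall y, 0 < y -> 0 <= Derive g y).
{ intros y Hy. destruct (Rlt_or_le (Derive g y) 0) as [Hneg|]; [exfalso|assumption].
  destruct (is_derive_pos_locally_increasing (fun t => - g t) y (- Derive g y))
    as [del [Hdel Hloc]]; [|lra|].
  { apply (is_derive_opp g), Derive_correct, g_derivable, Hy. }
  destruct (Hloc (del / 2)) as [_ H]; [lra|].
  pose proof (canonical_increasing y (y + del / 2)). lra. }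
intros Hx. destruct (Hnonneg x Hx) as [|Hcrit]; [assumption|exfalso].
assert (H2 := Derive2_pos_at_critical x Hx (canonical_pos x Hx) (eq_sym Hcrit)).
assert (Derive (Derive g) x = 0); [|lra].
rewrite <- (Derive_Reals _ x (ex_derive_Reals_0 _ _ (Dg_derivable x Hx))).
apply (deriv_minimum _ 0 (2 * x)); [lra|lra|].
intros y Hy1 Hy2. rewrite <- Hcrit. now apply Hnonneg.
Qed.

Lemma canonical_Derive_lower_bound :
  exists m, 0 < m /\ forall t, 1 <= t -> m / (1 + t) <= Derive g t.
Proof.
destruct (Lipschitz_linear_growth mu mu_Lipschitz) as [A [HA Hmu]].
set (phi := fun t => (1 + t) * Derive g t).
set (phi' := fun t => Derive g t + (1 + t) * Derive (Derive g) t).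
set (dl := r * g 1 / (2 * A)).
assert (Hg1 : 0 < g 1) by (apply canonical_pos; lra).
assert (Hdl : 0 < dl) by (unfold dl; apply Rdiv_lt_0_compat; nra).
assert (Hphi : forall t, 1 <= t -> is_derive phi t (phi' t)).
{ intros t Ht. unfold phi, phi'. auto_derive; [apply Dg_derivable; lra|].
  change (fun u => Derive g u) with (Derive g). ring. }
(* Where phi is small, the drift term mu g' is at most r g(1) / 2, so the ODE forces g'' > 0. *)
assert (Hphi_small : forall t, 1 <= t -> phi t < dl -> 0 < phi' t).
{ intros t Ht Hsmall. unfold phi, phi' in *.
  pose proof (g_ode t ltac:(lra)) as E. pose proof (sigma2_pos t ltac:(lra)).
  pose proof (canonical_Derive_pos t ltac:(lra)).
  assert (g 1 <= g t) by (destruct (Req_dec t 1) as [->|]; [lra|left; apply canonical_increasing; lra]).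
  assert (mu t * Derive g t <= A * ((1 + t) * Derive g t))
    by (rewrite <- Rmult_assoc; apply Rmult_le_compat_r; [lra|apply Hmu; lra]).
  assert (A * ((1 + t) * Derive g t) <= A * dl) by (apply Rmult_le_compat_l; lra).
  assert (A * dl = r * g 1 / 2) by (unfold dl; field; lra).
  assert (0 < Derive (Derive g) t) by nra.
  nra. }
exists (Rmin (phi 1) dl). split.
{ apply Rmin_glb_lt; [|exact Hdl]. pose proof (canonical_Derive_pos 1 ltac:(lra)). unfold phi. nra. }
intros t Ht.
assert (Hlow := ge_of_derive_pos_below phi phi' 1 (Rmin (phi 1) dl) Hphi
  (fun u Hu Hlt => Hphi_small u Hu (Rlt_le_trans _ _ _ Hlt (Rmin_r _ _)))
  (Rmin_l _ _) t Ht).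
unfold phi in Hlow. apply Rle_div_l; [lra|]. now rewrite Rmult_comm.
Qed.

Lemma canonical_lim_p_infty : is_lim g p_infty p_infty.
Proof.
destruct canonical_Derive_lower_bound as [m [Hm Hlow]].
apply (is_lim_le_p_loc (fun t => m * ln (1 + t) + (g 1 - m * ln 2))).
- exists 1. intros t Ht.
  assert (Hinc := increment_le_of_derive_le g (fun u => m * ln (1 + u))
    (Derive g) (fun u => m / (1 + u)) 1 t (Rlt_le _ _ Ht)).
  replace (1 + 1) with 2 in Hinc by ring.
  enough (m * ln (1 + t) - m * ln 2 <= g t - g 1) by lra.
  apply Hinc.
  + intros u Hu. apply Derive_correct, g_derivable. lra.
  + intros u Hu. auto_derive; [lra|field; lra].
  + intros u Hu. apply Hlow. lra.
- apply (is_lim_plus _ _ p_infty p_infty (g 1 - m * ln 2)); [|apply is_lim_const|reflexivity].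
  rewrite <- (Rbar_mult_pos_p_infty m Hm) at 2. apply is_lim_scal_l.
  apply (is_lim_comp ln (fun t => 1 + t) p_infty p_infty p_infty is_lim_ln_p).
  + eapply is_lim_plus; [apply is_lim_const|apply is_lim_id|reflexivity].
  + exists 0. intros; discriminate.
Qed.

End CanonicalSolution.

Lemma R_barrier_Rmin (g : R -> R) (x lo hi : R) :
  g lo <> g hi -> R_barrier g x lo hi = g (Rmin x hi) / (g hi - g lo).
Proof.
intros Hne. unfold R_barrier, Rmin. destruct (Rle_dec x hi); [reflexivity|].
field. intros E. apply Hne. lra.
Qed.

Lemma R_barrier_diag (g : R -> R) (lo h : R) : R_barrier g h lo h = g h / (g h - g lo).
Proof. unfold R_barrier. destruct (Rle_dec h h); [reflexivity|lra]. Qed.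

Section BarrierPolicy.

Variable g : R -> R.
Hypothesis g_0 : g 0 = 0.
Hypothesis g_incr : forall a b, 0 <= a -> a < b -> g a < g b.
Hypothesis g_cont : forall x, 0 < x -> continuous g x.
Hypothesis g_cont_0 : filterlim g (at_right 0) (locally 0).
Hypothesis g_lim : is_lim g p_infty p_infty.

Lemma increasing_pos (x : R) : 0 < x -> 0 < g x.
Proof. intros Hx. rewrite <- g_0. apply g_incr; lra. Qed.

Lemma increasing_le (a b : R) : 0 <= a -> a <= b -> g a <= g b.
Proof. intros Ha [Hab|<-]; [left; apply g_incr|right]; auto. Qed.

Lemma continuous_within_nonneg (D : R -> Prop) (lo : R) :
  (forall l, D l -> 0 <= l) -> 0 <= lo ->
  filterlim g (within D (locally lo)) (locally (g lo)).
Proof.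
intros HD [Hlo|<-].
- eapply filterlim_filter_le_1; [apply filter_le_within|]. now apply g_cont.
- rewrite g_0. intros P HP. specialize (g_cont_0 P HP).
  unfold filtermap, within, at_right in *. eapply filter_imp; [|exact g_cont_0].
  intros l Hl Dl. destruct (HD l Dl) as [Hl0|<-]; [now apply Hl|].
  rewrite g_0. now apply locally_singleton.
Qed.

Lemma is_lim_div_g_sub (c lo : R) : is_lim (fun h => c / (g h - g lo)) p_infty 0.
Proof.
replace (Finite 0) with (Rbar_div c p_infty) by (simpl; f_equal; ring).
apply is_lim_div; [apply is_lim_const| |discriminate|exact I].
eapply is_lim_minus; [exact g_lim|apply is_lim_const|reflexivity].
Qed.

Lemma continuous_div_g_sub (f : R -> R) (lo hi : R) :
  0 <= lo -> lo < hi -> continuous f hi ->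
  continuous (fun h => f h / (g h - g lo)) hi.
Proof.
intros Hlo Hhi Hf.
assert (Hd : g lo < g hi) by now apply g_incr.
apply (continuous_mult f (fun h => / (g h - g lo))); [exact Hf|].
apply continuous_Rinv_comp; [|lra].
apply (continuous_minus g (fun _ => g lo)); [apply g_cont; lra|apply continuous_const].
Qed.

Lemma R_barrier_hi_continuous (x lo hi : R) :
  0 < x -> 0 <= lo -> lo < hi -> continuous (fun h => R_barrier g x lo h) hi.
Proof.
intros Hx Hlo Hhi.
assert (Hloc : locally hi (fun h => g (Rmin x h) / (g h - g lo) = R_barrier g x lo h)).
{ apply (filter_imp (fun h => lo < h)); [|now apply open_gt].
  intros h Hh. symmetry. apply R_barrier_Rmin. apply Rlt_not_eq, g_incr; lra. }
unfold continuous. rewrite <- (locally_singleton _ _ Hloc).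
apply (filterlim_ext_loc _ _ Hloc), (continuous_div_g_sub (fun h => g (Rmin x h))); [lra|lra|].
apply (continuous_comp (Rmin x) g); [apply continuous_Rmin_l|].
apply g_cont, Rmin_pos; lra.
Qed.

Lemma R_barrier_hi_decreasing (x lo h1 h2 : R) :
  0 < x -> 0 <= lo -> lo < h1 -> h1 < h2 -> (0 < lo \/ x <= h1) ->
  R_barrier g x lo h2 < R_barrier g x lo h1.
Proof.
intros Hx Hlo H1 H12 Hcase.
assert (G1 : g lo < g h1) by now apply g_incr.
assert (G12 : g h1 < g h2) by (apply g_incr; lra).
rewrite !R_barrier_Rmin by lra.
destruct (Rle_dec x h1) as [Hxh|Hxh].
- rewrite !Rmin_left by lra.
  apply Rdiv_lt_contravar_denom; [now apply increasing_pos|lra|lra].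
- destruct Hcase as [Hlo'|]; [|lra].
  rewrite (Rmin_right x h1) by lra.
  assert (Hm : g (Rmin x h2) <= g h2)
    by (apply increasing_le; [left; apply Rmin_pos|apply Rmin_r]; lra).
  apply (Rle_lt_trans _ (g h2 / (g h2 - g lo))).
  + apply Rmult_le_compat_r; [left; apply Rinv_0_lt_compat; lra|exact Hm].
  + apply Rdiv_sub_lt; [now apply increasing_pos|lra|lra].
Qed.

Lemma R_barrier_hi_lim (x lo : R) :
  0 <= lo -> is_lim (fun h => R_barrier g x lo h) p_infty 0.
Proof.
intros Hlo.
apply (is_lim_ext_loc (fun h => g x / (g h - g lo))); [|apply is_lim_div_g_sub].
exists (Rmax x lo). intros h Hh.
rewrite R_barrier_Rmin, Rmin_left; [reflexivity| |].
- apply Rle_trans with (Rmax x lo); [apply Rmax_l|lra].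
- apply Rlt_not_eq, g_incr; [lra|]. apply Rle_lt_trans with (Rmax x lo); [apply Rmax_r|lra].
Qed.

Lemma R_barrier_lo_continuous (x lo hi : R) :
  0 <= lo -> lo < hi ->
  filterlim (fun l => R_barrier g x l hi)
    (within (fun l => 0 <= l /\ l < hi) (locally lo)) (locally (R_barrier g x lo hi)).
Proof.
intros Hlo Hhi.
assert (Hne : forall l, 0 <= l /\ l < hi -> g l <> g hi).
{ intros l [Hl Hlh]. apply Rlt_not_eq, g_incr; lra. }
apply (filterlim_within_ext _ (fun l => g (Rmin x hi) / (g hi - g l))).
{ intros l Hl. symmetry. now apply R_barrier_Rmin, Hne. }
rewrite R_barrier_Rmin by (apply Hne; lra).
apply (filterlim_comp _ _ _ g (fun t => g (Rmin x hi) / (g hi - t)) _ (locally (g lo))).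
- apply continuous_within_nonneg; [tauto|exact Hlo].
- apply (continuous_mult (fun _ => g (Rmin x hi)) (fun t => / (g hi - t)));
    [apply continuous_const|].
  apply continuous_Rinv_comp; [|specialize (Hne lo); simpl; lra].
  apply (continuous_minus (fun _ => g hi) (fun t => t));
    [apply continuous_const|apply continuous_id].
Qed.

Lemma R_barrier_lo_increasing (x l1 l2 hi : R) :
  0 < x -> 0 <= l1 -> l1 < l2 -> l2 < hi -> R_barrier g x l1 hi < R_barrier g x l2 hi.
Proof.
intros Hx H1 H12 H2.
assert (G12 : g l1 < g l2) by now apply g_incr.
assert (G2 : g l2 < g hi) by (apply g_incr; lra).
rewrite !R_barrier_Rmin by lra.
apply Rdiv_lt_contravar_denom; [|lra|lra].
apply increasing_pos, Rmin_pos; lra.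
Qed.

Lemma g_sub_at_left (hi : R) :
  0 < hi -> filterlim (fun l => g hi - g l) (at_left hi) (at_right 0).
Proof.
intros Hhi P HP.
assert (Hc : filterlim (fun l => g hi - g l) (locally hi) (locally 0)).
{ replace 0 with (g hi - g hi) by ring.
  apply (continuous_minus (fun _ => g hi) g); [apply continuous_const|now apply g_cont]. }
unfold filtermap, at_left, within.
apply (filter_imp (fun l => 0 < l /\ (0 < g hi - g l -> P (g hi - g l)))).
- intros l [Hl HPl] Hlh. apply HPl. assert (g l < g hi) by (apply g_incr; lra). lra.
- apply filter_and; [now apply open_gt|exact (Hc _ HP)].
Qed.

Lemma R_barrier_lo_lim (x hi : R) :
  0 < x -> 0 < hi ->
  filterlim (fun l => R_barrier g x l hi) (at_left hi) (Rbar_locally p_infty).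
Proof.
intros Hx Hhi.
assert (Hloc : at_left hi (fun l => g (Rmin x hi) / (g hi - g l) = R_barrier g x l hi)).
{ apply (filter_imp (fun l => 0 < l /\ l < hi)).
  2:{ apply filter_and; [apply filter_le_within; now apply open_gt|].
      unfold at_left, within. apply filter_forall. tauto. }
  intros l [Hl Hlh]. symmetry. apply R_barrier_Rmin, Rlt_not_eq, g_incr; lra. }
apply (filterlim_ext_loc _ _ Hloc).
apply (filterlim_comp _ _ _ _ (fun t => g (Rmin x hi) / t) _ (at_right 0)).
- now apply g_sub_at_left.
- apply filterlim_div_at_right_0, increasing_pos, Rmin_pos; lra.
Qed.

Lemma R_barrier_diag_continuous (lo hi : R) :
  0 <= lo -> lo < hi -> continuous (fun h => R_barrier g h lo h) hi.
Proof.
intros Hlo Hhi.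
apply (continuous_ext (fun h => g h / (g h - g lo))).
{ intros h. symmetry. apply R_barrier_diag. }
apply continuous_div_g_sub; [lra|lra|apply g_cont; lra].
Qed.

Lemma R_barrier_diag_decreasing (lo h1 h2 : R) :
  0 < lo -> lo < h1 -> h1 < h2 -> R_barrier g h2 lo h2 < R_barrier g h1 lo h1.
Proof.
intros Hlo H1 H12. rewrite !R_barrier_diag.
assert (g lo < g h1) by (apply g_incr; lra).
assert (g h1 < g h2) by (apply g_incr; lra).
apply Rdiv_sub_lt; [now apply increasing_pos|lra|lra].
Qed.

Lemma R_barrier_diag_lim (lo : R) :
  0 <= lo -> is_lim (fun h => R_barrier g h lo h) p_infty 1.
Proof.
intros Hlo.
apply (is_lim_ext_loc (fun h => 1 + g lo / (g h - g lo))).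
{ exists lo. intros h Hh. rewrite R_barrier_diag.
  assert (g lo < g h) by now apply g_incr. field. lra. }
replace (Finite 1) with (Finite (1 + 0)) by (f_equal; ring).
apply is_lim_plus'; [apply is_lim_const|apply is_lim_div_g_sub].
Qed.

Lemma R_barrier_diag_0 (hi : R) : 0 < hi -> R_barrier g hi 0 hi = 1.
Proof.
intros Hhi. rewrite R_barrier_diag, g_0, Rminus_0_r.
apply Rdiv_diag, Rgt_not_eq, increasing_pos, Hhi.
Qed.

End BarrierPolicy.

Theorem lemma2p5 (r : R) (mu sigma g : R -> R) :
  0 < r ->
  standing_assumptions r mu sigma ->
  canonical_solution r mu sigma g ->
  (* (i) *)
  (forall x, 0 < x ->
    (forall lo, 0 <= lo ->
       (forall hi, lo < hi -> continuous (fun h => R_barrier g x lo h) hi) /\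
       (forall h1 h2, lo < h1 -> h1 < h2 -> (0 < lo \/ x <= h1) ->
          R_barrier g x lo h2 < R_barrier g x lo h1) /\
       is_lim (fun h => R_barrier g x lo h) p_infty 0) /\
    (forall hi, 0 < hi ->
       (forall lo, 0 <= lo -> lo < hi ->
          filterlim (fun l => R_barrier g x l hi)
            (within (fun l => 0 <= l /\ l < hi) (locally lo))
            (locally (R_barrier g x lo hi))) /\
       (forall l1 l2, 0 <= l1 -> l1 < l2 -> l2 < hi ->
          R_barrier g x l1 hi < R_barrier g x l2 hi) /\
       filterlim (fun l => R_barrier g x l hi) (at_left hi)
         (Rbar_locally p_infty))) /\
  (* (ii) *)
  (forall lo, 0 < lo ->
     (forall hi, lo < hi -> continuous (fun h => R_barrier g h lo h) hi) /\
     (forall h1 h2, lo < h1 -> h1 < h2 ->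
        R_barrier g h2 lo h2 < R_barrier g h1 lo h1) /\
     is_lim (fun h => R_barrier g h lo h) p_infty 1) /\
  (forall hi, 0 < hi -> R_barrier g hi 0 hi = 1).
Proof.
intros Hr SA CS.
destruct SA as (_ & _ & _ & _ & Hmu & _ & _ & _ & Hsigma & _).
destruct CS as (Hode & G0 & d & Hd & Hg'0).
assert (Hsig : forall x, 0 < x -> 0 < sigma x ^ 2) by (intros x Hx; apply Hsigma; lra).
assert (Hg : forall x, 0 < x -> ex_derive g x) by (intros x Hx; apply Hode, Hx).
assert (HDg : forall x, 0 < x -> ex_derive (Derive g) x) by (intros x Hx; apply Hode, Hx).
assert (Heq : forall x, 0 < x ->
  mu x * Derive g x + / 2 * sigma x ^ 2 * Derive (Derive g) x = r * g x)
  by (intros x Hx; apply Hode, Hx).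
pose proof (canonical_increasing r mu sigma g d Hr Hsig Hg HDg Heq G0 Hd Hg'0) as Inc.
pose proof (canonical_continuous g Hg) as Cont.
pose proof (canonical_right_continuous_0 g d G0 Hg'0) as Cont0.
pose proof (canonical_lim_p_infty r mu sigma g d Hr Hsig Hmu Hg HDg Heq G0 Hd Hg'0) as Lim.
split; [|split].
- intros x Hx. split.
  + intros lo Hlo. split; [|split].
    * intros hi Hhi. now apply R_barrier_hi_continuous.
    * intros h1 h2 H1 H12 Hcase. now apply R_barrier_hi_decreasing.
    * now apply R_barrier_hi_lim.
  + intros hi Hhi. split; [|split].
    * intros lo Hlo Hlohi. now apply R_barrier_lo_continuous.
    * intros l1 l2 H1 H12 H2. now apply R_barrier_lo_increasing.
    * now apply R_barrier_lo_lim.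
- intros lo Hlo. split; [|split].
  + intros hi Hhi. apply R_barrier_diag_continuous; auto; lra.
  + intros h1 h2 H1 H12. now apply R_barrier_diag_decreasing.
  + apply R_barrier_diag_lim; auto; lra.
- intros hi Hhi. now apply R_barrier_diag_0.
Qed.
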